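(* Let $T>0$ and let $(X^N)_{N\ge1}$ be a sequence of real-valued stochastic processes with càdlàg paths on $[0,T]$. Suppose that $\sup_{N\ge1}\mathbb E[(X^N(0))^2+(X^N(T))^2]<\infty$, and that there exist $\alpha>1/2$, $\beta>1/2$ and a nondecreasing continuous function $G$ with $G(0)=0$ such that for all $0\le r\le s\le t\le T$, all $N\ge1$ and all $\lambda>0$, $$\mathbb P\big(|X^N(s)-X^N(r)|\wedge|X^N(t)-X^N(s)|\ge\lambda\big)\le\frac{[G(t)-G(r)]^{2\alpha}}{\lambda^{4\beta}}.$$ Then $\sup_{N\ge1}\mathbb E\big[\sup_{0\le t\le T}|X^N(t)|^2\big]<\infty$. *)

From HB Require Import structures.
From mathcomp Require Import all_boot all_order all_algebra.
From mathcomp Require Import all_classical all_reals all_analysis.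
Set Implicit Arguments. Unset Strict Implicit. Unset Printing Implicit Defensive.
Import Order.TTheory GRing.Theory Num.Theory.
Import numFieldNormedType.Exports.
Local Open Scope classical_set_scope.
Local Open Scope ring_scope.

Definition cadlag_on (R : realType) (T : R) (f : R -> R) : Prop :=
  (forall t, 0 <= t -> t < T -> f x @[x --> t^'+] --> f t) /\
  (forall t, 0 < t -> t <= T -> exists l : R, f x @[x --> t^'-] --> l).

Definition sup_sq_on (R : realType) (T : R) (f : R -> R) : \bar R :=
  ereal_sup [set ((f t) ^+ 2)%:E | t in [set t | 0 <= t <= T]].

(* Chaining on a grid which is dyadic for the clock [G t + t].  With
   [mu t = min(|X t - X 0|, |X T - X t|)] one has
   [X t ^ 2 <= 2 (X 0 ^ 2 + X T ^ 2) + 2 mu t ^ 2], and [mu t ^ 2] is bounded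
   by the layers [2 ^ i <= mu t] weighted by [3 * 4 ^ i].  If every triple of
   consecutive points of level [k + 1] has minimal increment below
   [2 ^ i (1 - theta) / 2 * theta ^ k], then by chaining every grid point, and
   by right continuity every [t], lies within [2 ^ i / 2] of [X 0] or [X T];
   so the layer [i] forces one of these exceedances.  The hypothesis bounds
   their probability by [((G T + T) / 2 ^ k) ^ (2 alpha) / threshold ^ (4 beta)],
   and summing over the [2 ^ (k + 1)] triples, the levels and the layers gives
   a double geometric series because [alpha, beta > 1/2].  Bounding the
   supremum pointwise by a series of indicators avoids any measurability
   question for it. *)

From HB Require Import structures.
From mathcomp Require Import all_boot all_order all_algebra.
From mathcomp Require Import all_classical all_reals all_analysis.
From mathcomp Require Import ring lra zify measurable_realfun.
Import Order.TTheory GRing.Theory Num.Theory.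
Import numFieldNormedType.Exports.
Local Open Scope classical_set_scope.
Local Open Scope ring_scope.

Set Implicit Arguments.
Unset Strict Implicit.
Unset Printing Implicit Defensive.

(* Unlike [ge0_le_integral], no measurability is required: the integral of a
   nonnegative function is the supremum of the integrals of its simple minorants. *)
Lemma ge0_le_integral_nonmeas (R : realType) (d : measure_display)
    (Omega : measurableType d) (mu : {measure set Omega -> \bar R})
    (f g : Omega -> \bar R) :
  (forall x, (0 <= f x)%E) -> (forall x, (f x <= g x)%E) ->
  (\int[mu]_x f x <= \int[mu]_x g x)%E.
Proof.
move=> f0 fg; have g0 x : (0 <= g x)%E by exact: le_trans (f0 x) (fg x).
rewrite !ge0_integralE// !patch_setT.
apply: le_ereal_sup => _ [h hf <-]; exists h => //= x.
exact: le_trans (hf x) (fg x).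
Qed.

Lemma nneseries_geometric_le (R : realType) (a z : R) : 0 <= a -> 0 < z < 1 ->
  (\sum_(n <oo) (a * z ^+ n)%:E <= (a / (1 - z))%:E)%E.
Proof.
move=> a0 /andP[z0 z1]; apply: lime_le.
  by apply: is_cvg_nneseries => n _ _; rewrite lee_fin mulr_ge0// exprn_ge0// ltW.
apply: nearW => n; rewrite sumEFin lee_fin.
by apply: geometric_le_lim; rewrite ?gtr0_norm.
Qed.

Lemma nneseries_ge_term (R : realType) (f : nat -> \bar R) k :
  (forall n, (0 <= f n)%E) -> (f k <= \sum_(n <oo) f n)%E.
Proof.
move=> f0; apply: le_trans (nneseries_lim_ge k.+1 (fun n _ _ => f0 n)).
by rewrite big_nat_recr//= leeDr// sume_ge0.
Qed.

Lemma sume_nat_ge_term (R : realDomainType) (f : nat -> \bar R) m k :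
  (forall n, (0 <= f n)%E) -> (k < m)%N -> (f k <= \sum_(0 <= n < m) f n)%E.
Proof.
move=> f0 km; rewrite (bigD1_seq k) ?mem_index_iota ?iota_uniq//=.
by rewrite leeDl// sume_ge0.
Qed.

Lemma powR_exprn (R : realType) (a p : R) (k : nat) :
  0 <= a -> (a ^+ k) `^ p = (a `^ p) ^+ k.
Proof. by move=> a0; rewrite -powR_mulrn// powRAC powR_mulrn// powR_ge0. Qed.

Lemma ltr_powR (R : realType) (a : R) : 1 < a -> {homo powR a : x y / x < y}.
Proof.
move=> a1 x y xy.
by rewrite /powR gt_eqF ?(lt_trans ltr01)// ltr_expR ltr_pM2r// ln_gt0.
Qed.

Lemma exists_chaining_ratio (R : realType) (alpha beta : R) :
  1 / 2 < alpha -> 0 < beta ->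
  exists2 theta : R, 0 < theta < 1 & 2 < 2 `^ (2 * alpha) * theta `^ (4 * beta).
Proof.
move=> alpha_gt beta_gt0; set a := 2 `^ (2 * alpha).
have a_gt2 : 2 < a by rewrite -[X in X < _]powRr1// ltr_powR// ?ltr1n//; lra.
have a_gt0 : 0 < a by rewrite (lt_trans _ a_gt2).
set c := (1 + 2 / a) / 2.
have c_gt : 2 / a < c.
  by rewrite /c ltr_pdivlMr// mulr_natr mulr2n ltrD2r ltr_pdivrMr ?mul1r//; lra.
have c_lt1 : c < 1 by rewrite /c ltr_pdivrMr// mul1r ltrD2l ltr_pdivrMr ?mul1r//; lra.
have c_gt0 : 0 < c by rewrite (le_lt_trans _ c_gt)// divr_ge0//; lra.
have b0 : 0 < 4 * beta by rewrite mulr_gt0.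
exists (c `^ (4 * beta)^-1).
  rewrite powR_gt0//=; have := @gt0_ltr_powR R (4 * beta)^-1 _ c 1.
  by rewrite powR1 invr_gt0 !nnegrE ler01 ltW// => /(_ b0 isT isT c_lt1).
by rewrite -powRrM mulVf ?gt_eqF// powRr1 ?(ltW c_gt0)// -ltr_pdivrMl// mulrC.
Qed.

Lemma dyadic_term_eq (R : realType) (L c theta p q : R) (i k : nat) :
  0 <= L -> 0 < c -> 0 < theta ->
  (2 ^ k.+1)%:R * (6 * 4 ^+ i * ((L / 2 ^+ k) `^ p / (2 ^+ i * (c * theta ^+ k)) `^ q))
  = 12 * L `^ p / c `^ q * (4 / 2 `^ q) ^+ i * (2 / (2 `^ p * theta `^ q)) ^+ k.
Proof.
move=> L0 c0 theta0; have pow2k_gt0 : 0 < (2 : R) ^+ k by rewrite exprn_gt0.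
have -> : (L / 2 ^+ k) `^ p = L `^ p / (2 `^ p) ^+ k.
  rewrite powRM ?invr_ge0 ?exprn_ge0// -powR_inv1 ?exprn_ge0//.
  by rewrite powRAC powR_inv1 ?powR_ge0// powR_exprn.
rewrite !powRM ?exprn_ge0 ?mulr_ge0 ?ltW ?exprn_gt0// !powR_exprn ?ltW//.
have : 2 `^ p != 0 :> R by rewrite gt_eqF// powR_gt0.
have : 2 `^ q != 0 :> R by rewrite gt_eqF// powR_gt0.
have : c `^ q != 0 by rewrite gt_eqF// powR_gt0.
have : theta `^ q != 0 by rewrite gt_eqF// powR_gt0.
move: (2 `^ p) (2 `^ q) (c `^ q) (theta `^ q) => a b cq tq tq0 cq0 b0 a0.
rewrite natrX exprSr !exprMn !exprVn exprMn.
have : a ^+ k != 0 by rewrite expf_neq0.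
have : b ^+ i != 0 by rewrite expf_neq0.
have : tq ^+ k != 0 by rewrite expf_neq0.
move: (a ^+ k) (b ^+ i) (tq ^+ k) (2 ^+ k) (4 ^+ i) => ak bi tqk tk fi tqk0 bi0 ak0.
by field; rewrite ak0 bi0 tqk0 cq0.
Qed.

Lemma sqr_le_dyadic_layers (R : archiRealFieldType) (mu : R) : 0 <= mu ->
  exists I : nat, mu ^+ 2 <= 1 + \sum_(i < I) 3 * 4 ^+ i * ((2 ^+ i <= mu)%R)%:R.
Proof.
move=> mu0.
have sum3 n : \sum_(i < n) 3 * (4 : R) ^+ i = 4 ^+ n - 1.
  elim: n => [|n IH]; first by rewrite big_ord0 expr0 subrr.
  by rewrite big_ord_recr /= IH exprS; ring.
suff layers I : mu < 2 ^+ I ->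
    mu ^+ 2 <= 1 + \sum_(i < I) 3 * 4 ^+ i * ((2 ^+ i <= mu)%R)%:R.
  have [n mu_n] : exists n : nat, mu < n%:R.
    by exists (Num.trunc mu).+1; case/andP: (truncn_itv mu0).
  exists n; apply: layers; rewrite (lt_le_trans mu_n)//.
  by rewrite -natrX ler_nat ltnW// ltn_expl.
elim: I => [|I IH] muI; first by rewrite big_ord0 addr0; rewrite expr0 in muI; nra.
have [mu_lt|mu_ge] := ltP mu (2 ^+ I).
  rewrite big_ord_recr /= addrA (le_trans (IH mu_lt))// lerDl.
  by rewrite mulr_ge0 ?ler0n// mulr_ge0// exprn_ge0.
rewrite (eq_bigr (fun i : 'I_I.+1 => 3 * 4 ^+ i)); last first.
  move=> i _; rewrite (le_trans _ mu_ge) ?mulr1// ler_eXn2l ?ltr1n//.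
  by rewrite -ltnS.
rewrite sum3 addrC subrK.
have -> : (4 : R) ^+ I.+1 = (2 ^+ I.+1) ^+ 2 by rewrite -exprM mulnC exprM; congr (_ ^+ _); lra.
by rewrite lerXn2r ?nnegrE ?exprn_ge0// ltW.
Qed.

Definition min_incr {R : realDomainType} {I : Type} (f : I -> R) (r s t : I) : R :=
  Num.min `|f s - f r| `|f t - f s|.

Lemma sqr_le_min_incr (R : realFieldType) (f : R -> R) (t T : R) :
  f t ^+ 2 <= 2 * (f 0 ^+ 2 + f T ^+ 2) + 2 * min_incr f 0 t T ^+ 2.
Proof.
have := sqr_ge0 (2 * f 0 - f t); have := sqr_ge0 (2 * f T - f t).
have := sqr_ge0 (f 0); have := sqr_ge0 (f T).
rewrite /min_incr; case: (leP `|f t - f 0| `|f T - f t|) => _;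
  rewrite real_normK ?num_real//; nra.
Qed.

(* Odd points of level n+1 are compared with their closer even neighbour,
   which belongs to level n. *)
Lemma dyadic_chain (R : realDomainType) (q : nat -> nat -> R) (w : nat -> R) :
  (forall k, 0 <= w k) ->
  (forall k j, q k.+1 j.*2 = q k j) ->
  (forall k j, (j.+2 <= 2 ^ k.+1)%N -> min_incr (q k.+1) j j.+1 j.+2 <= w k) ->
  forall n j, (j <= 2 ^ n)%N ->
    `|q n j - q 0%N 0%N| <= \sum_(k < n) w k \/
    `|q n j - q 0%N 1%N| <= \sum_(k < n) w k.
Proof.
move=> w0 q_double q_incr; elim=> [|n IH] j.
  rewrite big_ord0 expn0; case: j => [|[|//]] _; rewrite subrr normr0; by [left|right].
move=> j_le; have pow2S : (2 ^ n.+1 = (2 ^ n).*2)%N by rewrite expnS mul2n.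
have [p p_le close] : exists2 p, (p <= 2 ^ n)%N & `|q n.+1 j - q n p| <= w n.
  have [j_odd|j_even] := boolP (odd j); last first.
    have j2 : j = (j./2).*2 by rewrite -[LHS]odd_double_half (negbTE j_even).
    exists j./2; first by move: j_le; rewrite {1}j2 pow2S; lia.
    by rewrite {1}j2 q_double subrr normr0.
  have j2 : j = (j./2).*2.+1 by rewrite -[LHS]odd_double_half j_odd.
  have h_le : ((j./2).+1 <= 2 ^ n)%N.
    have : (j != 2 ^ n.+1)%N by apply: contraTneq j_odd => ->; rewrite oddX.
    by move: j_le; rewrite {1 2}j2 pow2S -!(rwP eqP); lia.
  have /q_incr : ((j./2).*2.+2 <= 2 ^ n.+1)%N by rewrite pow2S; move: h_le; lia.
  have jS : j.+1 = ((j./2).+1).*2 by rewrite {1}j2 doubleS.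
  rewrite /min_incr -j2 jS !q_double.
  case: (leP `|q n.+1 j - q n j./2| `|q n (j./2).+1 - q n.+1 j|) => _ H.
    by exists j./2; first exact: ltnW.
  by exists (j./2).+1; rewrite // distrC.
case: (IH p p_le) => H; [left|right];
  rewrite big_ord_recr /= (le_trans (ler_distD (q n p) _ _))// addrC lerD//.
Qed.

(* The dyadic grid is taken uniform for the clock [G t + t] rather than for
   [t]: the clock is continuous and strictly increasing, and [G] increases by
   at most [(G T + T) / 2 ^ n] between neighbours of level [n]. *)
Definition dyadic_point {R : realType} (T : R) (G : R -> R) (n j : nat) : R :=
  xget 0 [set t | 0 <= t <= T /\ G t + t = (G T + T) * j%:R / 2 ^+ n].

Section dyadic_grid.
Variables (R : realType) (T : R) (G : R -> R).
Hypotheses (T_gt0 : 0 < T) (G0 : G 0 = 0)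
  (G_nd : forall s t : R, 0 <= s -> s <= t -> t <= T -> G s <= G t)
  (G_cont : {within [set t | 0 <= t <= T], continuous G}).

Local Notation pt := (dyadic_point T G).
Local Notation L := (G T + T).

Lemma clock_total_gt0 : 0 < L.
Proof. by rewrite ltr_wpDl// -G0 G_nd// ltW. Qed.

Lemma clock_lt s t : 0 <= s -> s < t -> t <= T -> G s + s < G t + t.
Proof. by move=> s0 st tT; rewrite ler_ltD// G_nd// ltW. Qed.

Lemma dyadic_pointP n j : (j <= 2 ^ n)%N ->
  0 <= pt n j <= T /\ G (pt n j) + pt n j = L * j%:R / 2 ^+ n.
Proof.
move=> j_le; apply: (xgetPex 0 (P := [set t | 0 <= t <= T /\ _])).
have clock_cont : {within `[0, T], continuous (fun t => G t + t)}.
  have -> : `[0, T]%classic = [set t | 0 <= t <= T].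
    by apply/seteqP; split => x /=; rewrite in_itv.
  by move=> x; apply: cvgD; [exact: G_cont|exact: incl_subspace_continuous].
have v_ge0 : 0 <= L * j%:R / 2 ^+ n.
  by rewrite divr_ge0 ?exprn_ge0// mulr_ge0// ltW// clock_total_gt0.
have v_le : L * j%:R / 2 ^+ n <= L.
  by rewrite ler_pdivrMr ?exprn_gt0// ler_pM2l ?clock_total_gt0// -natrX ler_nat.
have [|t] := IVT (v := L * j%:R / 2 ^+ n) (ltW T_gt0) clock_cont.
  by rewrite G0 add0r ge_min le_max v_ge0 v_le !orbT.
by rewrite in_itv /= => t_in <-; exists t.
Qed.

Lemma dyadic_pointE n j t : 0 <= t <= T -> G t + t = L * j%:R / 2 ^+ n ->
  (j <= 2 ^ n)%N -> pt n j = t.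
Proof.
move=> /andP[t0 tT] tE j_le; have [/andP[p0 pT] pE] := dyadic_pointP j_le.
apply/eqP; rewrite eq_le !leNgt; apply/andP; split; apply/negP => lt.
  by have := clock_lt t0 lt pT; rewrite pE tE ltxx.
by have := clock_lt p0 lt tT; rewrite pE tE ltxx.
Qed.

Lemma dyadic_point00 : pt 0 0 = 0.
Proof. by apply: dyadic_pointE; rewrite ?lexx ?ltW// G0 addr0 mulr0 mul0r. Qed.

Lemma dyadic_point01 : pt 0 1 = T.
Proof. by apply: dyadic_pointE; rewrite ?lexx ?ltW// expr0 divr1 mulr1. Qed.

Lemma dyadic_point_double k j : pt k.+1 j.*2 = pt k j.
Proof.
rewrite /dyadic_point; have -> // : L * (j.*2)%:R / 2 ^+ k.+1 = L * j%:R / 2 ^+ k.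
by rewrite -mul2n natrM exprS; field; rewrite expf_neq0.
Qed.

Lemma dyadic_point_le n j j' : (j <= j')%N -> (j' <= 2 ^ n)%N -> pt n j <= pt n j'.
Proof.
move=> jj' j'_le; have [/andP[p0 pT] pE] := dyadic_pointP (leq_trans jj' j'_le).
have [/andP[p'0 _] p'E] := dyadic_pointP j'_le.
rewrite leNgt; apply/negP => lt; have := clock_lt p'0 lt pT.
rewrite pE p'E ltr_pM2r ?invr_gt0 ?exprn_gt0// ltr_pM2l ?clock_total_gt0//.
by rewrite ltr_nat ltnNge jj'.
Qed.

Lemma dyadic_point_G_incr n j j' : (j <= j')%N -> (j' <= 2 ^ n)%N ->
  G (pt n j') - G (pt n j) <= L * (j' - j)%:R / 2 ^+ n.
Proof.
move=> jj' j'_le; have [_ pE] := dyadic_pointP (leq_trans jj' j'_le).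
have [_ p'E] := dyadic_pointP j'_le.
have := dyadic_point_le jj' j'_le.
by rewrite natrB// mulrBr mulrBl -pE -p'E => ?; lra.
Qed.

Lemma dyadic_point_right_dense t r : 0 <= t -> t < T -> 0 < r ->
  exists n j, (j <= 2 ^ n)%N /\ t < pt n j < t + r.
Proof.
move=> t0 tT r0; have L0 := clock_total_gt0.
have [n hr] : exists n : nat, L / 2 ^+ n < r.
  have [n Lr] : exists n : nat, L / r < n%:R.
    exists (Num.trunc (L / r)).+1.
    by case/andP: (truncn_itv (divr_ge0 (ltW L0) (ltW r0))).
  exists n; rewrite ltr_pdivrMr ?exprn_gt0// -ltr_pdivrMl// mulrC (lt_le_trans Lr)//.
  by rewrite -natrX ler_nat ltnW// ltn_expl.
set c := G t + t; set h := L / 2 ^+ n in hr *.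
have c0 : 0 <= c by rewrite addr_ge0// -G0 G_nd// ltW.
have h0 : 0 < h by rewrite divr_gt0// exprn_gt0.
have [tr_le lt_tr] := andP (truncn_itv (divr_ge0 c0 (ltW h0))).
set j := (Num.trunc (c / h)).+1 in lt_tr.
have j_le : (j <= 2 ^ n)%N.
  rewrite -(ltr_nat R) (le_lt_trans tr_le)// natrX ltr_pdivrMr//.
  by rewrite mulrC divfK ?expf_neq0// clock_lt.
exists n, j; split => //.
have [/andP[p0 pT] pE] := dyadic_pointP j_le; set p := pt n j in p0 pT pE *.
have {pE}pE : G p + p = j%:R * h by rewrite pE /h mulrAC mulrC.
have c_lt : c < G p + p by rewrite pE -ltr_pdivrMr.
have le_ch : G p + p <= c + h.
  by rewrite pE -natr1 mulrDl mul1r lerD2r -ler_pdivlMr.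
have tp : t < p.
  rewrite ltNge; apply/negP => pt_le.
  by have := G_nd p0 pt_le (ltW tT); rewrite /c in c_lt => Gpt; lra.
have := G_nd t0 (ltW tp) pT; rewrite /c in c_lt le_ch => Gtp.
by rewrite tp /=; lra.
Qed.

Lemma min_incr_endpoints_le (f : R -> R) (w : nat -> R) (B : R) :
  (forall t, 0 <= t -> t < T -> f x @[x --> t^'+] --> f t) ->
  (forall k, 0 <= w k) -> (forall n, \sum_(k < n) w k <= B) ->
  (forall k j, (j.+2 <= 2 ^ k.+1)%N ->
     min_incr (f \o pt k.+1) j j.+1 j.+2 <= w k) ->
  forall t, 0 <= t <= T -> min_incr f 0 t T <= B.
Proof.
move=> f_rc w0 wB f_incr t /andP[t0 tT].
have B0 : 0 <= B by have := wB 0%N; rewrite big_ord0.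
have on_grid n j : (j <= 2 ^ n)%N ->
    `|f (pt n j) - f 0| <= B \/ `|f (pt n j) - f T| <= B.
  move=> j_le; have f_double k i : f (pt k.+1 i.*2) = f (pt k i).
    by rewrite dyadic_point_double.
  have := dyadic_chain (q := fun n j => f (pt n j)) w0 f_double f_incr j_le.
  rewrite /= dyadic_point00 dyadic_point01.
  by case=> H; [left|right]; exact: le_trans H (wB n).
have [tT'|Tt] := ltP t T; last first.
  have -> : t = T by apply/eqP; rewrite eq_le tT.
  by rewrite /min_incr subrr normr0 ge_min B0 orbT.
apply/ler_addgt0Pr => e e0.
have /cvgrPdist_lt/(_ e e0) [r /= r0 near_t] := f_rc t t0 tT'.
have [n [j [j_le /andP[tp pr]]]] := dyadic_point_right_dense t0 tT' r0.
have close : `|f t - f (pt n j)| < e.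
  by apply: near_t => //=; rewrite ltr0_norm ?subr_lt0// opprB ltrBlDl.
rewrite /min_incr ge_min; case: (on_grid n j j_le) => H; apply/orP; [left|right].
  by rewrite (le_trans (ler_distD (f (pt n j)) _ _))// addrC lerD// ltW.
by rewrite (le_trans (ler_distD (f (pt n j)) _ _))// distrC lerD// distrC ltW.
Qed.

Section chaining.
Variables (d : measure_display) (Omega : measurableType d).
Variables (P : probability Omega R) (X : R -> Omega -> R) (alpha beta theta : R).
Hypotheses (mX : forall t, measurable_fun setT (X t))
  (X_rc : forall w (t : R), 0 <= t -> t < T -> X x w @[x --> t^'+] --> X t w).
Hypotheses (alpha_ge0 : 0 <= alpha) (beta_gt : 1 / 2 < beta) (theta01 : 0 < theta < 1)
  (theta_gt : 2 < 2 `^ (2 * alpha) * theta `^ (4 * beta)).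
Hypothesis X_incr : forall r s t lambda : R,
  0 <= r -> r <= s -> s <= t -> t <= T -> 0 < lambda ->
  (P [set w | (lambda <= min_incr (X ^~ w) r s t)%R] <=
   ((G t - G r) `^ (2 * alpha) / lambda `^ (4 * beta))%:E)%E.

Definition threshold (i k : nat) : R := 2 ^+ i * ((1 - theta) / 2 * theta ^+ k).

Definition exceedance (i k j : nat) : set Omega :=
  [set w | threshold i k <= min_incr (X ^~ w) (pt k.+1 j) (pt k.+1 j.+1) (pt k.+1 j.+2)].

(* [(2 ^ k.+1).-1] is the number of triples of consecutive points of level
   [k.+1]; the weight [6 * 4 ^ i] is twice the weight of layer [i] in
   [sqr_le_dyadic_layers], the factor 2 coming from [sqr_le_min_incr]. *)
Definition exceedance_row (i k : nat) (w : Omega) : \bar R :=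
  \sum_(0 <= j < (2 ^ k.+1).-1) (6 * 4 ^+ i * \1_(exceedance i k j) w : R)%:E.

Definition exceedance_count (w : Omega) : \bar R :=
  \sum_(i <oo) \sum_(k <oo) exceedance_row i k w.

Definition chaining_const : R :=
  12 * L `^ (2 * alpha) / ((1 - theta) / 2) `^ (4 * beta)
  / (1 - 2 / (2 `^ (2 * alpha) * theta `^ (4 * beta))) / (1 - 4 / 2 `^ (4 * beta)).

Lemma threshold_gt0 i k : 0 < threshold i k.
Proof.
have [theta0 theta1] := andP theta01.
by rewrite mulr_gt0 ?exprn_gt0// mulr_gt0 ?exprn_gt0// divr_gt0// subr_gt0.
Qed.

Lemma threshold_sum_le i n : \sum_(k < n) threshold i k <= 2 ^+ i / 2.
Proof.
have [theta0 theta1] := andP theta01.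
have -> : \sum_(k < n) threshold i k =
    series (geometric (2 ^+ i * ((1 - theta) / 2)) theta) n.
  by rewrite /series /= big_mkord; apply: eq_bigr => k _; rewrite /threshold mulrA.
apply: le_trans (geometric_le_lim _ _ theta0 _) _.
- by rewrite mulr_ge0 ?exprn_ge0// divr_ge0// subr_ge0 ltW.
- by rewrite gtr0_norm.
by rewrite le_eqVlt; apply/orP; left; apply/eqP; field; rewrite subr_eq0 gt_eqF.
Qed.

Lemma measurable_exceedance i k j : measurable (exceedance i k j).
Proof.
have m_dist s r : measurable_fun setT (fun w => `|X s w - X r w|).
  exact: measurableT_comp (@normr_measurable R setT) (measurable_funB (mX s) (mX r)).
have := measurable_minr (m_dist (pt k.+1 j.+1) (pt k.+1 j))
  (m_dist (pt k.+1 j.+2) (pt k.+1 j.+1)) measurableT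
  (measurable_itv `[threshold i k, +oo[).
rewrite setTI; congr measurable; apply/seteqP; split => w /=;
  by rewrite in_itv /= andbT.
Qed.

Lemma exceedance_term_ge0 i k j w :
  (0 <= (6 * 4 ^+ i * \1_(exceedance i k j) w : R)%:E)%E.
Proof. by rewrite lee_fin mulr_ge0 ?mulr_ge0 ?exprn_ge0// indicE ler0n. Qed.

Lemma measurable_exceedance_term i k j :
  measurable_fun setT (fun w => (6 * 4 ^+ i * \1_(exceedance i k j) w : R)%:E).
Proof.
apply/measurable_EFinP; apply: measurable_funM; first exact: measurable_cst.
exact/measurable_indic/measurable_exceedance.
Qed.

Lemma exceedance_row_ge0 i k w : (0 <= exceedance_row i k w)%E.
Proof. by apply: sume_ge0 => j _; exact: exceedance_term_ge0. Qed.

Lemma measurable_exceedance_row i k : measurable_fun setT (exceedance_row i k).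
Proof. by apply: emeasurable_sum => j; exact: measurable_exceedance_term. Qed.

Lemma exceedance_count_ge0 w : (0 <= exceedance_count w)%E.
Proof.
apply: nneseries_ge0 => i _ _; apply: nneseries_ge0 => k _ _.
exact: exceedance_row_ge0.
Qed.

Lemma measurable_exceedance_count : measurable_fun setT exceedance_count.
Proof.
apply: ge0_emeasurable_sum => [i w _ _|i _].
  by apply: nneseries_ge0 => k _ _; exact: exceedance_row_ge0.
apply: ge0_emeasurable_sum => [k w _ _|k _]; first exact: exceedance_row_ge0.
exact: measurable_exceedance_row.
Qed.

Lemma integral_exceedance_count :
  (\int[P]_w exceedance_count w =
   \sum_(i <oo) \sum_(k <oo) \sum_(0 <= j < (2 ^ k.+1).-1)
     ((6 * 4 ^+ i)%:E * P (exceedance i k j)))%E.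
Proof.
rewrite integral_nneseries//; last first.
- by move=> i w _; apply: nneseries_ge0 => k _ _; exact: exceedance_row_ge0.
- move=> i; apply: ge0_emeasurable_sum => [k w _ _|k _]; first exact: exceedance_row_ge0.
  exact: measurable_exceedance_row.
apply: eq_eseriesr => i _; rewrite integral_nneseries//; last first.
- by move=> k w _; exact: exceedance_row_ge0.
- exact: measurable_exceedance_row.
apply: eq_eseriesr => k _; rewrite /exceedance_row.
rewrite (ge0_integral_sum P measurableT (measurable_exceedance_term i k)
  (fun j w _ => exceedance_term_ge0 i k j w)).
apply: eq_bigr => j _; have mE := measurable_exceedance i k j.
rewrite (integralZl_indic _ (fun=> exceedance i k j))// ?integral_indic ?setIT//.
by rewrite ltNge mulr_ge0 ?exprn_ge0.
Qed.

Lemma exceedance_le i k j : (j < (2 ^ k.+1).-1)%N ->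
  (P (exceedance i k j) <=
   ((L / 2 ^+ k) `^ (2 * alpha) / threshold i k `^ (4 * beta))%:E)%E.
Proof.
move=> j_lt; have j2 : (j.+2 <= 2 ^ k.+1)%N by have := expn_gt0 2 k.+1; lia.
have [/andP[r0 _] _] := dyadic_pointP (ltnW (ltnW j2)).
have [/andP[_ tT] _] := dyadic_pointP j2.
have rs := dyadic_point_le (leqnSn j) (ltnW j2).
have st := dyadic_point_le (leqnSn j.+1) j2.
apply: le_trans (X_incr r0 rs st tT (threshold_gt0 i k)) _.
rewrite lee_fin ler_pM2r ?invr_gt0 ?powR_gt0 ?threshold_gt0//.
apply: ge0_ler_powR; rewrite ?nnegrE.
- by rewrite mulr_ge0.
- by rewrite subr_ge0 G_nd// (le_trans rs st).
- by rewrite divr_ge0 ?exprn_ge0// ltW// clock_total_gt0.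
have -> : L / 2 ^+ k = L * (j.+2 - j)%:R / 2 ^+ k.+1.
  by rewrite (_ : (j.+2 - j)%N = 2%N) ?exprS; [field; rewrite expf_neq0|lia].
exact: dyadic_point_G_incr (leq_trans (leqnSn j) (leqnSn j.+1)) j2.
Qed.

Lemma integral_exceedance_count_le :
  (\int[P]_w exceedance_count w <= chaining_const%:E)%E.
Proof.
have [theta0 theta1] := andP theta01.
set D := 12 * L `^ (2 * alpha) / ((1 - theta) / 2) `^ (4 * beta).
set u := 4 / 2 `^ (4 * beta).
set v := 2 / (2 `^ (2 * alpha) * theta `^ (4 * beta)).
have D0 : 0 <= D by rewrite divr_ge0 ?powR_ge0// mulr_ge0// powR_ge0.
have u01 : 0 < u < 1.
  rewrite divr_gt0 ?powR_gt0//= ltr_pdivrMr ?powR_gt0// mul1r.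
  rewrite [X in X < _](_ : 4 = 2 `^ 2%:R); last by rewrite powR_mulrn// expr2 -natrM.
  by apply: ltr_powR; [rewrite ltr1n|move: beta_gt; lra].
have v01 : 0 < v < 1.
  by rewrite divr_gt0 ?mulr_gt0 ?powR_gt0//= ltr_pdivrMr ?mulr_gt0 ?powR_gt0// mul1r.
have [[u0 u1] [v0 v1]] := (andP u01, andP v01).
rewrite integral_exceedance_count /chaining_const -/D -/u -/v.
apply: (le_trans _ (nneseries_geometric_le _ u01)); last first.
  by rewrite divr_ge0// subr_ge0 ltW.
apply: lee_nneseries => [i _ _|i _].
  apply: nneseries_ge0 => k _ _; apply: sume_ge0 => j _.
  by rewrite mule_ge0// lee_fin mulr_ge0// exprn_ge0.
rewrite mulrAC; apply: (le_trans _ (nneseries_geometric_le _ v01)); last first.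
  by rewrite mulr_ge0// exprn_ge0// ltW.
apply: lee_nneseries => [k _ _|k _].
  by apply: sume_ge0 => j _; rewrite mule_ge0// lee_fin mulr_ge0// exprn_ge0.
rewrite big_nat_cond.
set b := (L / 2 ^+ k) `^ (2 * alpha) / threshold i k `^ (4 * beta).
apply: (@le_trans _ _ (\sum_(0 <= j < (2 ^ k.+1).-1) (6 * 4 ^+ i * b)%:E)%E).
  rewrite [leRHS]big_nat_cond; apply: lee_sum => j /andP[/andP[_ j_lt] _].
  rewrite [leRHS]EFinM; apply: lee_wpmul2l; rewrite ?lee_fin ?mulr_ge0 ?exprn_ge0//.
  exact: exceedance_le.
have c0 : 0 < (1 - theta) / 2 by rewrite divr_gt0// subr_gt0.
rewrite sumEFin lee_fin sumr_const_nat subn0 -[leLHS]mulr_natl /b /threshold.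
rewrite -dyadic_term_eq ?(ltW clock_total_gt0)// ler_wpM2r ?ler_nat ?leq_pred//.
by rewrite mulr_ge0 ?exprn_ge0// divr_ge0 ?powR_ge0.
Qed.

Lemma exceedance_of_layer w t i : 0 <= t <= T ->
  2 ^+ i <= min_incr (X ^~ w) 0 t T ->
  exists k j, (j < (2 ^ k.+1).-1)%N /\ exceedance i k j w.
Proof.
move=> t_in layer; apply: contrapT => none.
have : min_incr (X ^~ w) 0 t T <= 2 ^+ i / 2.
  apply: (min_incr_endpoints_le (@X_rc w) (fun k => ltW (threshold_gt0 i k))
    (threshold_sum_le i) _ t_in) => k j j2.
  rewrite leNgt; apply/negP => gt; apply: none; exists k, j; split.
    by have := expn_gt0 2 k.+1; lia.
  exact: ltW.
have : 0 < 2 ^+ i :> R by rewrite exprn_gt0.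
by move: layer; lra.
Qed.

Lemma sup_sq_le_exceedance_count w :
  (sup_sq_on T (X ^~ w) <=
   (2 * (X 0 w ^+ 2 + X T w ^+ 2) + 2)%:E + exceedance_count w)%E.
Proof.
apply: ge_ereal_sup => _ [t t_in <-].
set mu := min_incr (X ^~ w) 0 t T.
have mu0 : 0 <= mu by rewrite le_min !normr_ge0.
have [I mu_sq] := sqr_le_dyadic_layers mu0.
have layers : (\sum_(i < I) (6 * 4 ^+ i * ((2 ^+ i <= mu)%R)%:R)%:E <=
               exceedance_count w)%E.
  rewrite -(big_mkord xpredT (fun i => (6 * 4 ^+ i * ((2 ^+ i <= mu)%R)%:R)%:E)).
  apply: (le_trans _ (nneseries_lim_ge I _)); last first.
    by move=> i _ _; apply: nneseries_ge0 => k _ _; exact: exceedance_row_ge0.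
  apply: lee_sum => i _; have [layer|_] := boolP (2 ^+ i <= mu); last first.
    by rewrite mulr0 nneseries_ge0// => k _ _; exact: exceedance_row_ge0.
  have [k [j [j_lt Ekj]]] := exceedance_of_layer t_in layer.
  apply: (le_trans _ (nneseries_ge_term k _)); last first.
    by move=> n; exact: exceedance_row_ge0.
  apply: (le_trans _ (sume_nat_ge_term (fun j => exceedance_term_ge0 i k j w) j_lt)).
  by rewrite indicE mem_set.
rewrite (le_trans _ (leeD2l _ layers))// sumEFin -EFinD lee_fin.
have e : \sum_(i < I) 6 * 4 ^+ i * ((2 ^+ i <= mu)%R)%:R =
         2 * \sum_(i < I) 3 * 4 ^+ i * ((2 ^+ i <= mu)%R)%:R :> R.
  by rewrite mulr_sumr; apply: eq_bigr => i _; ring.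
by rewrite e; have := sqr_le_min_incr (X ^~ w) t T; rewrite -/mu /=; lra.
Qed.

Lemma integral_sup_sq_le :
  (\int[P]_w sup_sq_on T (X ^~ w) <=
   2%:E * \int[P]_w (X 0 w ^+ 2 + X T w ^+ 2)%:E + (2 + chaining_const)%:E)%E.
Proof.
have sup_ge0 w : (0 <= sup_sq_on T (X ^~ w))%E.
  apply: (le_trans _ (ereal_sup_ubound (x := (X 0 w ^+ 2)%:E) _)).
    by rewrite lee_fin sqr_ge0.
  by exists 0 => //=; rewrite lexx ltW.
have Y0 w : 0 <= 2 * (X 0 w ^+ 2 + X T w ^+ 2) by rewrite mulr_ge0 ?addr_ge0 ?sqr_ge0.
have mY : measurable_fun setT (fun w => X 0 w ^+ 2 + X T w ^+ 2).
  by apply: measurable_funD; apply: measurable_funX.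
have A0 w : (0 <= (2 * (X 0 w ^+ 2 + X T w ^+ 2) + 2)%:E)%E.
  by rewrite lee_fin addr_ge0.
have mA : measurable_fun setT (fun w => (2 * (X 0 w ^+ 2 + X T w ^+ 2) + 2)%:E).
  by apply/measurable_EFinP/measurable_funD/measurable_cst/measurable_funM.
have intA : (\int[P]_w (2 * (X 0 w ^+ 2 + X T w ^+ 2) + 2)%:E =
             2%:E * \int[P]_w (X 0 w ^+ 2 + X T w ^+ 2)%:E + 2%:E)%E.
  under eq_integral do rewrite EFinD EFinM.
  rewrite (ge0_integralD P measurableT); last 4 first.
  - by move=> w _; rewrite mule_ge0// lee_fin addr_ge0 ?sqr_ge0.
  - by apply: emeasurable_funM => //; exact/measurable_EFinP.
  - by move=> w _; rewrite lee_fin.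
  - exact: measurable_cst.
  rewrite integral_cst//= probability_setT mule1 ge0_integralZl_EFin//.
  - by move=> w _; rewrite lee_fin addr_ge0 ?sqr_ge0.
  - exact/measurable_EFinP.
apply: le_trans (ge0_le_integral_nonmeas P sup_ge0 sup_sq_le_exceedance_count) _.
rewrite (ge0_integralD P measurableT (fun w _ => A0 w) mA
  (fun w _ => exceedance_count_ge0 w) measurable_exceedance_count).
rewrite intA -addeA (EFinD 2 chaining_const) leeD2l// leeD2l//.
exact: integral_exceedance_count_le.
Qed.

End chaining.
End dyadic_grid.

Theorem theorem3p1 (R : realType) (d : measure_display) (Omega : measurableType d)
  (P : probability Omega R) (T : R) (X : nat -> R -> Omega -> R)
  (alpha beta : R) (G : R -> R) :
  0 < T ->
  (forall N t, measurable_fun setT (X N t)) ->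
  (forall N omega, (0 < N)%N -> cadlag_on T (fun t => X N t omega)) ->
  (exists C : R, forall N, (0 < N)%N ->
     (\int[P]_omega (((X N 0 omega) ^+ 2 + (X N T omega) ^+ 2)%:E) <= C%:E)%E) ->
  1 / 2 < alpha -> 1 / 2 < beta ->
  (forall s t, 0 <= s -> s <= t -> t <= T -> G s <= G t) ->
  {within [set t | 0 <= t <= T], continuous G} ->
  G 0 = 0 ->
  (forall (r s t : R) (N : nat) (lambda : R),
     0 <= r -> r <= s -> s <= t -> t <= T -> (0 < N)%N -> 0 < lambda ->
     (P [set omega | (lambda <= Num.min `|X N s omega - X N r omega|
                                    `|X N t omega - X N s omega|)%R ]
      <= ((G t - G r) `^ (2 * alpha) / lambda `^ (4 * beta))%:E)%E) ->
  exists C : R, forall N, (0 < N)%N ->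
    (\int[P]_omega sup_sq_on T (fun t => X N t omega) <= C%:E)%E.
Proof.
move=> T_gt0 mX cadlag [C endpoints_le] alpha_gt beta_gt G_nd G_cont G0 incr_le.
have [theta theta01 theta_gt] : exists2 theta : R, 0 < theta < 1 &
    2 < 2 `^ (2 * alpha) * theta `^ (4 * beta).
  by apply: exists_chaining_ratio alpha_gt _; lra.
exists (2 * C + (2 + chaining_const T G alpha beta theta)) => N N0.
have X_rc w := (cadlag N w N0).1.
have X_incr r s t lambda r0 rs st tT lambda0 :=
  incr_le r s t N lambda r0 rs st tT N0 lambda0.
have alpha_ge0 : 0 <= alpha by lra.
apply: le_trans (integral_sup_sq_le T_gt0 G0 G_nd G_cont (mX N) X_rc alpha_ge0
  beta_gt theta01 theta_gt X_incr) _.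
rewrite (EFinD (2 * C)) (EFinM 2 C) leeD2r//; apply: lee_wpmul2l; first by rewrite lee_fin.
exact: endpoints_le.
Qed.
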